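(* Let $(\Sigma,\mathscr{P})$ be a Kelvin-Planck theory with a Clausius-Duhem pair $(\eta^\circ,T^\circ)$, and let $(\mathscr{v},\mathscr{w})\in\mathscr{V}(\Sigma)$ satisfy $\int_\Sigma\eta^\circ\,d\mathscr{v}-\int_\Sigma\frac{d\mathscr{w}}{T^\circ}=0$. If $(\mathscr{v},\mathscr{w})\notin\hat{\mathscr{P}}$, then there is another Clausius-Duhem pair $(\eta,T)$ such that $\int_\Sigma\eta\,d\mathscr{v}-\int_\Sigma\frac{d\mathscr{w}}{T}<0$.
   Context: $\Sigma$ is a compact Hausdorff space. $\mathscr{M}(\Sigma)$ is the vector space of regular signed Borel measures on $\Sigma$ with its weak-star topology; $\mathscr{M}_+(\Sigma)$ the nonnegative members; $\mathscr{M}^\circ(\Sigma)=\{\mu:\mu(\Sigma)=0\}$; $\mathscr{V}(\Sigma)=\mathscr{M}^\circ(\Sigma)\oplus\mathscr{M}(\Sigma)$ with the product topology. For $\mathscr{P}\subset\mathscr{V}(\Sigma)$, $\hat{\mathscr{P}}$ is the closure of the set of nonnegative multiples of members of $\mathscr{P}$. A thermodynamical theory is $(\Sigma,\mathscr{P})$ with $\hat{\mathscr{P}}$ convex; it is Kelvin-Planck if $\hat{\mathscr{P}}\cap\{(0,\nu):\nu\in\mathscr{M}_+(\Sigma)\}=\{(0,0)\}$. A Clausius-Duhem pair is $(\eta,T)$, $\eta\in C(\Sigma,\mathbb{R})$, $T\in C(\Sigma,(0,\infty))$, with $\int_\Sigma\eta\,d(\Delta\mathscr{m})\ge\int_\Sigma\frac{d\mathscr{q}}{T}$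 for all $(\Delta\mathscr{m},\mathscr{q})\in\mathscr{P}$. *)

From HB Require Import structures.
From mathcomp Require Import all_boot all_order all_algebra.
From mathcomp Require Import all_classical all_reals all_analysis.
Set Implicit Arguments. Unset Strict Implicit. Unset Printing Implicit Defensive.
Import Order.TTheory GRing.Theory Num.Theory numFieldTopology.Exports.
Local Open Scope classical_set_scope.
Local Open Scope ring_scope.

Definition Borel (S : ptopologicalType) := g_sigma_algebraType (@open S).

Section Thermo.
Context (R : realType) (S : ptopologicalType).

Definition sgmeasure := {charge set (Borel S) -> \bar R}.

Definition hahn_pn (nu : sgmeasure) :
  {PN : set (Borel S) * set (Borel S) | hahn_decomposition nu PN.1 PN.2}.
Proof.
have /cid [P /cid [N HPN]] := Hahn_decomposition nu.
by exists (P, N).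
Defined.

Definition variation (nu : sgmeasure) : set (Borel S) -> \bar R :=
  charge_variation (proj2_sig (hahn_pn nu)).

Definition sint (nu : sgmeasure) (f : S -> R) : R :=
  fine (\int[jordan_pos (proj2_sig (hahn_pn nu))]_x (f x)%:E) -
  fine (\int[jordan_neg (proj2_sig (hahn_pn nu))]_x (f x)%:E).

Definition regular_measure (mu : set (Borel S) -> \bar R) : Prop :=
  forall E : set (Borel S), measurable E ->
    mu E = ereal_inf [set mu U | U in [set U : set S | open U /\ E `<=` U]] /\
    mu E = ereal_sup [set mu K | K in [set K : set S | compact K /\ K `<=` E]].

Definition inM (nu : sgmeasure) : Prop := regular_measure (variation nu).

Definition nonneg_measure (nu : sgmeasure) : Prop :=
  forall A : set (Borel S), measurable A -> (0 <= nu A)%E.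

Definition inV (v w : sgmeasure) : Prop :=
  [/\ inM v, inM w & v [set: Borel S] = 0%E].

(* hat P : the closure, in V(S) with the product of the weak-star topologies,
   of the set of nonnegative multiples of members of P.  Membership is
   written through the basic weak-star neighbourhoods (finitely many
   continuous test functions and a radius eps); note that
   int f d(t mu) = t * int f dmu. *)
Definition hatP (P : set (sgmeasure * sgmeasure)) (v w : sgmeasure) : Prop :=
  inV v w /\
  forall (n : nat) (f g : nat -> S -> R),
    (forall i, continuous (f i)) -> (forall i, continuous (g i)) ->
    forall eps : R, 0 < eps ->
    exists t : R, 0 <= t /\ exists p, P p /\
      forall i, (i < n)%N ->
        `|t * sint p.1 (f i) - sint v (f i)| < eps /\
        `|t * sint p.2 (g i) - sint w (g i)| < eps.

Definition zero_measure : sgmeasure := @czero _ (Borel S) R.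

Definition thermo_theory (P : set (sgmeasure * sgmeasure)) : Prop :=
  (forall p, P p -> inV p.1 p.2) /\
  forall (v1 w1 v2 w2 : sgmeasure) (l : R), 0 <= l <= 1 ->
    hatP P v1 w1 -> hatP P v2 w2 ->
    hatP P (cadd (cscale l v1) (cscale (1 - l) v2))
           (cadd (cscale l w1) (cscale (1 - l) w2)).

Definition kelvin_planck (P : set (sgmeasure * sgmeasure)) : Prop :=
  hatP P zero_measure zero_measure /\
  forall nu : sgmeasure, inM nu -> nonneg_measure nu ->
    hatP P zero_measure nu ->
    forall A : set (Borel S), measurable A -> nu A = 0%E.

Definition CD_pair (P : set (sgmeasure * sgmeasure)) (eta T : S -> R) : Prop :=
  [/\ continuous eta, continuous T, (forall x, 0 < T x) &
      forall dm q, P (dm, q) -> sint q (fun x => (T x)^-1) <= sint dm eta].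

End Thermo.

(* Since (v, w) lies outside the closed convex cone hat P, finitely many continuous test
   functions f_i (against the first component) and g_i (against the second) already separate
   it: in R^(2n) the image of (v, w) keeps a positive distance from the convex cone spanned by
   the images of hat P, so a hyperplane through the origin separates them.  Its normal a
   yields continuous F = sum a_i f_i and G = sum a'_i g_i with int F dm + int G dq >= 0 on P
   and < 0 at (v, w).  Perturbing eta0 to eta0 + d F and 1/T0 to 1/T0 - d G, with d > 0 so
   small that 1/T stays positive on the compact space, keeps the Clausius-Duhem inequality and
   makes the defect at (v, w) equal to d (int F dv + int G dw) < 0. *)

From HB Require Import structures.
From mathcomp Require Import all_boot all_order all_algebra.
From mathcomp Require Import all_classical all_reals all_analysis.
From mathcomp Require Import ring lra measurable_realfun.
Import Order.TTheory GRing.Theory Num.Theory numFieldTopology.Exports.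
Local Open Scope classical_set_scope.
Local Open Scope ring_scope.

Section ConvexCone.
Context {K : realFieldType} {V : lmodType K}.
Implicit Types A : set V.

Definition conv_closed A :=
  forall y1 y2 l, A y1 -> A y2 -> 0 <= l <= 1 -> A (l *: y1 + (1 - l) *: y2).

Definition cone_hull A := [set y | exists s a, [/\ 0 <= s, A a & y = s *: a]].

Lemma cone_hullZ A y t : cone_hull A y -> 0 <= t -> cone_hull A (t *: y).
Proof.
move=> [s [a [s0 Aa ->]]] t0; exists (t * s), a.
by split=> //; [exact: mulr_ge0 | rewrite scalerA].
Qed.

Lemma cone_hull0 A : A !=set0 -> cone_hull A 0.
Proof. by move=> [a Aa]; exists 0, a; rewrite scale0r. Qed.

Lemma conv_closed_cone_hull A : conv_closed A -> conv_closed (cone_hull A).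
Proof.
move=> convA _ _ l [s1 [a1 [s10 Aa1 ->]]] [s2 [a2 [s20 Aa2 ->]]] /andP[l0 l1].
have ls1 : 0 <= l * s1 by exact: mulr_ge0.
have ls2 : 0 <= (1 - l) * s2 by rewrite mulr_ge0 // subr_ge0.
pose s := l * s1 + (1 - l) * s2.
have [s_eq0|s_neq0] := eqVneq s 0.
  move: s_eq0; rewrite /s => s_eq0.
  have e1 : l * s1 = 0 by lra.
  have e2 : (1 - l) * s2 = 0 by lra.
  exists 0, a1; split=> //.
  by rewrite !scalerA e1 e2 !scale0r addr0.
have s_gt0 : 0 < s by rewrite lt0r s_neq0 addr_ge0.
pose mu := l * s1 / s.
have mu01 : 0 <= mu <= 1.
  apply/andP; split; first exact: divr_ge0 ls1 (ltW s_gt0).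
  by rewrite ler_pdivrMr // mul1r /s; lra.
exists s, (mu *: a1 + (1 - mu) *: a2); split; [exact: ltW | exact: convA |].
rewrite scalerDr !scalerA /mu.
by congr (_ *: _ + _ *: _); rewrite /s; field; rewrite -/s s_neq0.
Qed.

End ConvexCone.

Section NearestPoint.
Context {R : realType} {m : nat}.
Local Notation V := 'rV[R]_m.
Implicit Types (a y z : V) (H : set V).

Definition dotv a y : R := \sum_k a ord0 k * y ord0 k.

Definition sqdist z y : R := \sum_k (y ord0 k - z ord0 k) ^+ 2.

Lemma continuous_sqdist z : continuous (sqdist z).
Proof.
apply: continuous_big => [|k _]; first exact: add_continuous.
have coordB : continuous (fun y : V => y ord0 k - z ord0 k).
  by move=> y; apply: continuousB; [exact: coord_continuous | exact: cst_continuous].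
move=> y; under eq_fun do rewrite expr2.
exact: (continuousM (coordB y) (coordB y)).
Qed.

Lemma sqdist_ge0 z y : 0 <= sqdist z y.
Proof. by apply: sumr_ge0 => k _; exact: sqr_ge0. Qed.

Lemma ler_sqdist z y k : (y ord0 k - z ord0 k) ^+ 2 <= sqdist z y.
Proof. by rewrite /sqdist (bigD1 k) //= lerDl sumr_ge0 // => i _; rewrite sqr_ge0. Qed.

Lemma compact_sqdist_le z C : compact [set y | sqdist z y <= C].
Proof.
have normr_le (x D : R) : x ^+ 2 <= D -> `|x| <= 1 + D.
  by move=> xD; rewrite ler_norml; apply/andP; split; nra.
apply: bounded_closed_compact; last first.
  apply: (@preimage_closed _ _ (sqdist z) [set x | x <= C]); last exact: closed_le.
  by move=> y _; exact: continuous_sqdist.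
rewrite /= /bounded_near; near=> M => y /= yC.
rewrite [leLHS]/Num.norm /= mx_normrE; apply: bigmax_le => [|[i k] _ /=].
  by near: M; apply: nbhs_pinfty_ge; rewrite num_real.
rewrite (ord1 i) -[y ord0 k](subrK (z ord0 k)).
apply: le_trans (ler_normD _ _) _.
have yk : `|y ord0 k - z ord0 k| <= 1 + C.
  by apply/normr_le/(le_trans (ler_sqdist z y k)).
have zk : `|z ord0 k| <= 1 + sqdist z 0.
  by apply: normr_le; have := ler_sqdist z 0 k; rewrite mxE sub0r sqrrN.
apply: le_trans (lerD yk zk) _.
by near: M; apply: nbhs_pinfty_ge; rewrite num_real.
Unshelve. all: by end_near.
Qed.

Lemma nearest_point H z : H !=set0 ->
  exists2 h, closure H h & forall y, H y -> sqdist z h <= sqdist z y.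
Proof.
move=> [y0 Hy0].
pose K := closure H `&` [set y | sqdist z y <= sqdist z y0].
have Ky0 : K y0 by split; [exact: subset_closure | rewrite /= lexx].
have cK : compact K.
  by rewrite /K setIC; apply: compact_closedI; [exact: compact_sqdist_le | exact: closed_closure].
have [h /set_mem [clh _] hmin] := compact_EVT_min (ex_intro _ y0 Ky0) cK
  (continuous_subspaceT (continuous_sqdist z)).
exists h => // y Hy; have [yy0|/ltW y0y] := leP (sqdist z y) (sqdist z y0).
  by apply: hmin; apply/mem_set; split=> //; exact: subset_closure.
by apply: le_trans y0y; apply: hmin; apply/mem_set.
Qed.

Lemma first_order_ge0 (D U : R) : 0 <= U ->
  (forall t, 0 < t <= 1 -> 0 <= 2 * t * D + t ^+ 2 * U) -> 0 <= D.
Proof.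
move=> U0 quad; rewrite leNgt; apply/negP => D0.
pose t := - D / (U - D).
have t0 : 0 < t by rewrite divr_gt0 // ?oppr_gt0 //; lra.
have t1 : t <= 1 by rewrite ler_pdivrMr ?mul1r; lra.
have tU : t * U <= - D by rewrite mulrAC ler_pdivrMr; nra.
have := quad t (ltac:(by apply/andP)).
have -> : 2 * t * D + t ^+ 2 * U = t * (2 * D + t * U) by ring.
rewrite pmulr_rge0 //; lra.
Qed.

Lemma dotv0 a : dotv a 0 = 0.
Proof. by rewrite /dotv big1 // => k _; rewrite mxE mulr0. Qed.

Lemma dotvZ a t y : dotv a (t *: y) = t * dotv a y.
Proof. by rewrite /dotv mulr_sumr; apply: eq_bigr => k _; rewrite mxE mulrCA. Qed.

Lemma nearest_point_dotv H z h : conv_closed H -> closure H h ->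
  (forall y, H y -> sqdist z h <= sqdist z y) ->
  forall y, H y -> dotv (h - z) h <= dotv (h - z) y.
Proof.
move=> convH clh hmin y Hy.
have expand t : sqdist z (t *: y + (1 - t) *: h) =
    sqdist z h + (2 * t * (dotv (h - z) y - dotv (h - z) h) + t ^+ 2 * sqdist h y).
  rewrite /sqdist /dotv -sumrB mulr_sumr mulr_sumr -!big_split /=.
  by apply: eq_bigr => k _; rewrite !mxE; ring.
rewrite -subr_ge0; apply: (first_order_ge0 _ _ (sqdist_ge0 h y)) => t /andP[t0 t1].
rewrite -(lerDl (sqdist z h)) -expand.
(* [x |-> t y + (1 - t) x] maps H into H, so this closed condition passes from H to h. *)
have : closure H `<=` [set x | sqdist z h <= sqdist z (t *: y + (1 - t) *: x)].
  rewrite closureE; apply: smallest_sub => [|x Hx /=]; last first.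
    by apply: hmin; apply: convH => //; apply/andP; split; [exact: ltW|].
  apply: (@preimage_closed _ _ _ [set r | sqdist z h <= r]); last exact: closed_ge.
  move=> x _; apply: continuous_comp; last exact: continuous_sqdist.
  apply: continuousD; first exact: cst_continuous.
  by apply: (@continuousZl_tmp _ _ _ (fun x : V => x)); exact: cvg_id.
exact.
Qed.

Lemma cone_separation H z c : conv_closed H -> H 0 ->
  (forall y t, H y -> 0 <= t -> H (t *: y)) ->
  0 < c -> (forall y, H y -> c <= sqdist z y) ->
  exists a, (forall y, H y -> 0 <= dotv a y) /\ dotv a z < 0.
Proof.
move=> convH H0 coneH c0 gap.
have [h clh hmin] := @nearest_point H z (ex_intro _ 0 H0).
have hvar := @nearest_point_dotv H z h convH clh hmin.
have gaph : c <= sqdist z h.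
  move: clh; rewrite closureE; apply: (smallest_sub _ gap).
  apply: (@preimage_closed _ _ _ [set r | c <= r]); last exact: closed_ge.
  by move=> x _; exact: continuous_sqdist.
have ah_le0 : dotv (h - z) h <= 0 by rewrite -(dotv0 (h - z)); exact: hvar.
exists (h - z); split.
  move=> y Hy; rewrite leNgt; apply/negP => ay.
  (* otherwise [dotv (h - z) (t *: y)] would drop below the lower bound [dotv (h - z) h] *)
  pose t := (dotv (h - z) h - 1) / dotv (h - z) y.
  have t0 : 0 <= t by rewrite ler_ndivlMr // mul0r; lra.
  have := hvar _ (coneH y t Hy t0).
  by rewrite dotvZ divfK ?lt_eqF //; lra.
have -> : dotv (h - z) z = dotv (h - z) h - sqdist z h.
  by rewrite /dotv /sqdist -sumrB; apply: eq_bigr => k _; rewrite !mxE; ring.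
lra.
Qed.

End NearestPoint.

Lemma scalerB_entry (K : pzRingType) m n t (x y : 'M[K]_(m, n)) i j :
  (t *: x - y) i j = t * x i j - y i j.
Proof. by rewrite !mxE. Qed.

Section Thermo.
Context {R : realType} {S : ptopologicalType}.
Local Notation T := (Borel S).
Local Notation finite_measure := {finite_measure set T -> \bar R}.
Local Notation sgm := (sgmeasure R S).
Implicit Types (nu : sgm).

Lemma continuous_measurable (f : S -> R) : continuous f -> measurable_fun [set: T] f.
Proof.
move=> cf; apply: (measurability _ (RGenOpens.measurableE R)).
move=> _ [_ [a [b ->] <-]]; apply: measurableI => //.
by apply: sub_sigma_algebra; move/continuousP: cf; apply; exact: interval_open.
Qed.

Lemma cst_mul_continuous (c : R) {F : S -> R} :
  continuous F -> continuous (fun x => c * F x).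
Proof. by move=> cF x; apply: (@continuousM _ _ (fun=> c) F); [exact: cst_continuous | exact: cF]. Qed.

Lemma continuous_lincomb (I : Type) (r : seq I) (c : I -> R) (F : I -> S -> R) :
  (forall i, continuous (F i)) -> continuous (fun x => \sum_(i <- r) c i * F i x).
Proof.
move=> cF; apply: continuous_big => [|i _]; [exact: add_continuous | exact: cst_mul_continuous].
Qed.

Lemma continuous_inv_pos (T0 : S -> R) : continuous T0 -> (forall x, 0 < T0 x) ->
  continuous (fun x => (T0 x)^-1).
Proof. by move=> cT0 T0pos x; apply: continuousV; [rewrite gt_eqF | exact: cT0]. Qed.

Hypothesis cS : compact [set: S].

Lemma continuous_bounded (f : S -> R) : continuous f -> exists M, forall x, `|f x| <= M.
Proof.
move=> cf; have cnf : continuous (fun x => `|f x|).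
  by move=> x; apply: continuous_comp (cf x) _; exact: norm_continuous.
have [c _ cmax] := compact_EVT_max (ex_intro _ point I) cS (continuous_subspaceT cnf).
by exists `|f c| => x; apply: cmax; exact: in_setT.
Qed.

Lemma continuous_integrable (mu : finite_measure) (f : S -> R) :
  continuous f -> mu.-integrable [set: T] (EFin \o f).
Proof.
move=> cf; apply: measurable_bounded_integrable => //.
- by apply: fin_num_fun_lty; exact: fin_num_measure.
- exact: continuous_measurable.
have [M fM] := continuous_bounded _ cf; rewrite /bounded_near.
near=> N => x _ /=; apply: le_trans (fM x) _.
by near: N; apply: nbhs_pinfty_ge; rewrite num_real.
Unshelve. all: by end_near.
Qed.

Lemma integral_continuousE (mu : finite_measure) (f : S -> R) : continuous f ->
  (\int[mu]_x (f x)%:E = (\int[mu]_x f x)%:E)%E.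
Proof.
by move=> cf; rewrite fineK //; apply: integrable_fin_num => //; exact: continuous_integrable.
Qed.

Section JordanCombination.
Variables (p n p1 n1 p2 n2 : finite_measure) (l : R).
Hypothesis l01 : 0 <= l <= 1.
(* p - n = l (p1 - n1) + (1 - l) (p2 - n2), rearranged to avoid subtracting in \bar R *)
Hypothesis balance : forall A, measurable A ->
  (p A + (l%:E * n1 A + (1 - l)%:E * n2 A) = n A + (l%:E * p1 A + (1 - l)%:E * p2 A))%E.

Lemma Rintegral_balance_ge0 (g : S -> R) : continuous g -> (forall x, 0 <= g x) ->
  \int[p]_x g x + (l * \int[n1]_x g x + (1 - l) * \int[n2]_x g x) =
  \int[n]_x g x + (l * \int[p1]_x g x + (1 - l) * \int[p2]_x g x).
Proof.
move=> cg g0; have /andP[l0 l1] := l01; have l1' : 0 <= 1 - l by lra.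
pose L := NngNum l0; pose L' := NngNum l1'.
pose mu := measure_add p (measure_add (mscale L n1) (mscale L' n2)).
pose mu' := measure_add n (measure_add (mscale L p1) (mscale L' p2)).
have mg : measurable_fun [set: T] (fun x => (g x)%:E).
  by apply/measurable_EFinP; exact: continuous_measurable.
have g0' x : [set: T] x -> (0 <= (g x)%:E)%E by rewrite lee_fin.
have int_add (m1 m2 : {measure set T -> \bar R}) :
    (\int[measure_add m1 m2]_x (g x)%:E = \int[m1]_x (g x)%:E + \int[m2]_x (g x)%:E)%E.
  exact: ge0_integral_measure_add.
have int_scale (k : {nonneg R}) (m : {measure set T -> \bar R}) :
    (\int[mscale k m]_x (g x)%:E = k%:num%:E * \int[m]_x (g x)%:E)%E.
  exact: ge0_integral_mscale.
have : (\int[mu]_x (g x)%:E = \int[mu']_x (g x)%:E)%E.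
  apply: eq_measure_integral => A mA _.
  by rewrite /= /msum !big_ord_recl !big_ord0 /= /msum !big_ord_recl !big_ord0 /= !adde0 balance.
by rewrite !int_add !int_scale /= !integral_continuousE // -!EFinM -!EFinD => -[].
Qed.

Lemma Rintegral_balance (f : S -> R) : continuous f ->
  \int[p]_x f x - \int[n]_x f x =
  l * (\int[p1]_x f x - \int[n1]_x f x) + (1 - l) * (\int[p2]_x f x - \int[n2]_x f x).
Proof.
(* shift f by its bound M to reduce to nonnegative integrands *)
move=> cf; have [M fM] := continuous_bounded _ cf.
have M0 : 0 <= M by exact: le_trans (normr_ge0 _) (fM point).
have cM : continuous (fun _ : S => M) by move=> x; exact: cst_continuous.
have cfM : continuous (fun x => f x + M) by move=> x; apply: continuousD; [exact: cf | exact: cM].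
have fM0 x : 0 <= f x + M by have := fM x; rewrite ler_norml => /andP[? _]; lra.
have shift (mu : finite_measure) : \int[mu]_x (f x + M) = \int[mu]_x f x + \int[mu]_x M.
  by apply: RintegralD => //; exact: continuous_integrable.
have := Rintegral_balance_ge0 _ cfM fM0; rewrite !shift.
have := Rintegral_balance_ge0 _ cM (fun=> M0).
lra.
Qed.

End JordanCombination.

Lemma sintE nu (f : S -> R) : sint nu f =
  \int[jordan_pos (proj2_sig (hahn_pn nu))]_x f x - \int[jordan_neg (proj2_sig (hahn_pn nu))]_x f x.
Proof. by []. Qed.

Lemma sintD nu (f g : S -> R) : continuous f -> continuous g ->
  sint nu (fun x => f x + g x) = sint nu f + sint nu g.
Proof.
by move=> cf cg; rewrite !sintE !RintegralD //= ?continuous_integrable //; ring.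
Qed.

Lemma sintZ nu c (f : S -> R) : continuous f -> sint nu (fun x => c * f x) = c * sint nu f.
Proof. by move=> cf; rewrite !sintE !RintegralZl //= ?continuous_integrable //; ring. Qed.

Lemma sint_sum nu (I : Type) (r : seq I) (c : I -> R) (F : I -> S -> R) :
  (forall i, continuous (F i)) ->
  sint nu (fun x => \sum_(i <- r) c i * F i x) = \sum_(i <- r) c i * sint nu (F i).
Proof.
move=> cF; have ccF i := cst_mul_continuous (c i) (cF i).
elim: r => [|i r IH].
  rewrite big_nil -[RHS](mul0r (sint nu (fun=> 0))) -sintZ; last exact: cst_continuous.
  by congr sint; apply/funext => x; rewrite big_nil mul0r.
rewrite big_cons; under eq_fun do rewrite big_cons.
by rewrite sintD ?sintZ ?IH //; exact: continuous_lincomb.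
Qed.

Lemma fin_num_balance (l : R) (v1 v2 a b a1 b1 a2 b2 : \bar R) :
  a \is a fin_num -> b \is a fin_num -> a1 \is a fin_num -> b1 \is a fin_num ->
  a2 \is a fin_num -> b2 \is a fin_num ->
  (v1 = a1 + (-1)%:E * b1 -> v2 = a2 + (-1)%:E * b2 ->
   l%:E * v1 + (1 - l)%:E * v2 = a + (-1)%:E * b ->
   a + (l%:E * b1 + (1 - l)%:E * b2) = b + (l%:E * a1 + (1 - l)%:E * a2))%E.
Proof.
move: a b a1 b1 a2 b2 => [a| |] // [b| |] // [a1| |] // [b1| |] // [a2| |] // [b2| |] // _ _ _ _ _ _.
by move=> -> ->; rewrite -!EFinM -!EFinD => -[e]; congr EFin; nra.
Qed.

Lemma sint_conv nu1 nu2 l (f : S -> R) : 0 <= l <= 1 -> continuous f ->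
  sint (cadd (cscale l nu1) (cscale (1 - l) nu2)) f = l * sint nu1 f + (1 - l) * sint nu2 f.
Proof.
move=> l01 cf; rewrite !sintE; apply: Rintegral_balance => // A mA.
move: (jordan_decomp (proj2_sig (hahn_pn nu1)) mA) (jordan_decomp (proj2_sig (hahn_pn nu2)) mA)
  (jordan_decomp (proj2_sig (hahn_pn (cadd (cscale l nu1) (cscale (1 - l) nu2)))) mA).
by rewrite /cadd /cscale /=; apply: fin_num_balance; exact: fin_num_measure.
Qed.

Definition cd_defect (eta T : S -> R) (v w : sgm) : R :=
  sint v eta - sint w (fun x => (T x)^-1).

Lemma small_shift_pos (T0 G : S -> R) : continuous T0 -> (forall x, 0 < T0 x) ->
  continuous G -> exists2 d, 0 < d & forall x, d * G x < (T0 x)^-1.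
Proof.
move=> cT0 T0pos cG; have [c _ cmin] := compact_EVT_min (ex_intro _ point I) cS
  (continuous_subspaceT (continuous_inv_pos _ cT0 T0pos)).
have [M GM] := continuous_bounded _ cG.
have M0 : 0 <= M by exact: le_trans (normr_ge0 _) (GM point).
have m0 : 0 < (T0 c)^-1 by rewrite invr_gt0.
exists ((T0 c)^-1 / (M + 1)) => [|x]; first by rewrite divr_gt0 //; lra.
apply: (lt_le_trans _ (cmin x (mem_set I))).
rewrite mulrAC ltr_pdivrMr; last lra.
have := GM x; rewrite ler_norml => /andP[_ GxM]; nra.
Qed.

Lemma cd_defect_perturb (eta0 T0 F G : S -> R) (d : R) (dm dq : sgm) :
  continuous eta0 -> continuous T0 -> (forall x, 0 < T0 x) ->
  continuous F -> continuous G ->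
  cd_defect (fun x => eta0 x + d * F x) (fun x => ((T0 x)^-1 - d * G x)^-1) dm dq =
  cd_defect eta0 T0 dm dq + d * (sint dm F + sint dq G).
Proof.
move=> ceta0 cT0 T0pos cF cG; rewrite /cd_defect.
have -> : (fun x => ((T0 x)^-1 - d * G x)^-1^-1) = (fun x => (T0 x)^-1 + (- d) * G x).
  by apply/funext => x; rewrite invrK mulNr.
rewrite (sintD _ _ _ ceta0 (cst_mul_continuous d cF)).
rewrite (sintD _ _ _ (continuous_inv_pos _ cT0 T0pos) (cst_mul_continuous (- d) cG)).
by rewrite !sintZ //; ring.
Qed.

Section ThermoTheory.
Variable P : set (sgm * sgm).
Implicit Types (f g : nat -> S -> R) (q : sgm * sgm).

Definition test_vector n f g q : 'rV[R]_(n + n) :=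
  row_mx (\row_(i < n) sint q.1 (f i)) (\row_(i < n) sint q.2 (g i)).

Lemma test_vectorEl n f g q i : test_vector n f g q ord0 (lshift n i) = sint q.1 (f i).
Proof. by rewrite row_mxEl mxE. Qed.

Lemma test_vectorEr n f g q i : test_vector n f g q ord0 (rshift n i) = sint q.2 (g i).
Proof. by rewrite row_mxEr mxE. Qed.

Lemma hatP_test_approx n f g q eps :
  (forall i, continuous (f i)) -> (forall i, continuous (g i)) ->
  hatP P q.1 q.2 -> 0 < eps -> exists t p, [/\ 0 <= t, P p &
  forall k, `|(t *: test_vector n f g p - test_vector n f g q) ord0 k| < eps].
Proof.
move=> cf cg [_ hq] eps0; have [t [t0 [p [Pp close]]]] := hq n f g cf cg eps eps0.
exists t, p; split=> // k; rewrite scalerB_entry.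
rewrite -(splitK k); case: (fintype.split k) => i /=.
  by rewrite test_vectorEl test_vectorEl; exact: (close i (ltn_ord i)).1.
by rewrite test_vectorEr test_vectorEr; exact: (close i (ltn_ord i)).2.
Qed.

Lemma not_hatP_far v w : inV v w -> ~ hatP P v w ->
  exists n f g, [/\ (forall i, continuous (f i)), (forall i, continuous (g i)) &
  exists2 eps, 0 < eps & forall t p, 0 <= t -> P p ->
    exists k, eps <= `|(t *: test_vector n f g p - test_vector n f g (v, w)) ord0 k|].
Proof.
move=> vwV notin; apply: contrapT => near; apply: notin; split=> // n f g cf cg eps eps0.
apply: contrapT => nonear; apply: near; exists n, f, g; split=> //; exists eps => // t p t0 Pp.
apply: contrapT => nofar; apply: nonear; exists t; split=> //; exists p; split=> // i ilt.
have close k : `|(t *: test_vector n f g p - test_vector n f g (v, w)) ord0 k| < eps.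
  by rewrite ltNge; apply/negP => ek; apply: nofar; exists k.
have := close (rshift n (Ordinal ilt)); have := close (lshift n (Ordinal ilt)).
by rewrite !scalerB_entry !test_vectorEl !test_vectorEr.
Qed.

Lemma hatP_of_P p : thermo_theory P -> P p -> hatP P p.1 p.2.
Proof.
move=> thP Pp; split; first exact: thP.1.
move=> n f g _ _ eps eps0; exists 1; split=> //; exists p; split=> // i _.
by rewrite !mul1r !subrr normr0.
Qed.

Lemma conv_closed_test_image n f g : thermo_theory P ->
  (forall i, continuous (f i)) -> (forall i, continuous (g i)) ->
  conv_closed [set test_vector n f g q | q in [set q | hatP P q.1 q.2]].
Proof.
move=> thP cf cg _ _ l [q1 hq1 <-] [q2 hq2 <-] l01.
exists (cadd (cscale l q1.1) (cscale (1 - l) q2.1) : sgm,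
        cadd (cscale l q1.2) (cscale (1 - l) q2.2) : sgm).
  exact: thP.2.
rewrite /test_vector scale_row_mx scale_row_mx add_row_mx; congr row_mx; apply/rowP => i.
  by rewrite !mxE sint_conv.
by rewrite !mxE sint_conv.
Qed.

Lemma test_cone_gap n f g v w eps : P !=set0 -> 0 < eps ->
  (forall t p, 0 <= t -> P p ->
    exists k, eps <= `|(t *: test_vector n f g p - test_vector n f g (v, w)) ord0 k|) ->
  (forall i, continuous (f i)) -> (forall i, continuous (g i)) ->
  forall s q, 0 <= s -> hatP P q.1 q.2 ->
  (eps / 2) ^+ 2 <= sqdist (test_vector n f g (v, w)) (s *: test_vector n f g q).
Proof.
move=> [p0 Pp0] eps0 far cf cg s q s0 hq.
(* approximate s q within eps/2 by a multiple of a member of P; for s = 0 any member will do *)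
have [t [p [t0 Pp close]]] : exists t p, [/\ 0 <= t, P p &
    forall k, s * `|(t *: test_vector n f g p - test_vector n f g q) ord0 k| < eps / 2].
  have [->|s_neq0] := eqVneq s 0.
    by exists 0, p0; split=> // k; rewrite mul0r divr_gt0.
  have s_gt0 : 0 < s by rewrite lt0r s_neq0.
  have eps'0 : 0 < eps / (s * 2) by rewrite divr_gt0 // mulr_gt0.
  have [t [p [t0 Pp close]]] := hatP_test_approx n f g q (eps / (s * 2)) cf cg hq eps'0.
  exists t, p; split=> // k; rewrite -ltr_pdivlMl //.
  by rewrite (_ : s^-1 * (eps / 2) = eps / (s * 2)) // invfM; field; rewrite s_neq0.
have [k far_k] := far (s * t) p (mulr_ge0 s0 t0) Pp.
have sq_le := ler_sqdist (test_vector n f g (v, w)) (s *: test_vector n f g q) k.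
have close_k := close k; rewrite scalerB_entry in far_k; rewrite scalerB_entry in close_k.
rewrite mxE in sq_le.
set a := test_vector n f g p ord0 k in far_k close_k.
set b := test_vector n f g q ord0 k in far_k close_k sq_le.
set c := test_vector n f g (v, w) ord0 k in far_k close_k sq_le.
have tri : eps <= s * `|t * a - b| + `|s * b - c|.
  apply: le_trans far_k _; rewrite -[s in s * `|_|]ger0_norm // -normrM.
  have -> : s * t * a - c = s * (t * a - b) + (s * b - c) by ring.
  exact: ler_normD.
apply: le_trans sq_le; rewrite -[(s * b - c) ^+ 2]real_normK ?num_real //.
have X0 : 0 <= s * `|t * a - b| by rewrite mulr_ge0.
have e2 : 0 < eps / 2 by rewrite divr_gt0.
have : eps / 2 <= `|s * b - c| by lra.
nra.
Qed.

Lemma dotv_test_vector n f g (a : 'rV[R]_(n + n)) q :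
  (forall i, continuous (f i)) -> (forall i, continuous (g i)) ->
  dotv a (test_vector n f g q) =
  sint q.1 (fun x => \sum_(i < n) a ord0 (lshift n i) * f i x) +
  sint q.2 (fun x => \sum_(i < n) a ord0 (rshift n i) * g i x).
Proof.
move=> cf cg; rewrite /dotv big_split_ord !sint_sum //.
by congr (_ + _); apply: eq_bigr => i _; rewrite ?test_vectorEl ?test_vectorEr.
Qed.

Lemma CD_pair_perturb (eta0 T0 F G : S -> R) (d : R) : CD_pair P eta0 T0 ->
  continuous F -> continuous G -> 0 < d -> (forall x, d * G x < (T0 x)^-1) ->
  (forall dm dq, P (dm, dq) -> 0 <= sint dm F + sint dq G) ->
  CD_pair P (fun x => eta0 x + d * F x) (fun x => ((T0 x)^-1 - d * G x)^-1).
Proof.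
move=> [ceta0 cT0 T0pos cdP] cF cG d0 dG FG_ge0; split.
- by move=> x; apply: cvgD; [exact: ceta0 | exact: (cst_mul_continuous d cF)].
- apply: continuous_inv_pos => [x|x]; last by rewrite subr_gt0.
  apply: cvgB; [exact: continuous_inv_pos | exact: (cst_mul_continuous d cG)].
- by move=> x; rewrite invr_gt0 subr_gt0.
move=> dm dq Pdq; rewrite -subr_ge0.
have := cd_defect_perturb _ _ _ _ d dm dq ceta0 cT0 T0pos cF cG; rewrite /cd_defect => ->.
by rewrite addr_ge0 ?mulr_ge0 ?subr_ge0 ?cdP ?FG_ge0 // ltW.
Qed.

End ThermoTheory.
End Thermo.

Theorem lemma3p2 (R : realType) (S : ptopologicalType)
  (hS : hausdorff_space S) (cS : compact [set: S])
  (P : set (sgmeasure R S * sgmeasure R S))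
  (P_nonempty : P !=set0)
  (thP : thermo_theory P) (kpP : kelvin_planck P)
  (eta0 T0 : S -> R) (cd0 : CD_pair P eta0 T0)
  (v w : sgmeasure R S) (vwV : inV v w)
  (heq : sint v eta0 - sint w (fun x => (T0 x)^-1) = 0)
  (notin : ~ hatP P v w) :
  exists eta T : S -> R, CD_pair P eta T /\
    sint v eta - sint w (fun x => (T x)^-1) < 0.
Proof.
have [n [f [g [cf cg [eps eps0 far]]]]] := not_hatP_far P v w vwV notin.
pose Phi := test_vector n f g.
pose H := cone_hull [set Phi q | q in [set q | hatP P q.1 q.2]].
have [a [aH az]] : exists a, (forall y, H y -> 0 <= dotv a y) /\ dotv a (Phi (v, w)) < 0.
  apply: (@cone_separation _ _ H _ ((eps / 2) ^+ 2)).
  - by apply: conv_closed_cone_hull; exact: conv_closed_test_image.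
  - apply: cone_hull0; exists (Phi (zero_measure R S, zero_measure R S)).
    by exists (zero_measure R S, zero_measure R S) => //; exact: kpP.1.
  - by move=> y t; exact: cone_hullZ.
  - by rewrite exprn_gt0 // divr_gt0.
  - by move=> _ [s [a [s0 [q hq <-] ->]]]; apply: (@test_cone_gap _ _ P).
have [ceta0 cT0 T0pos _] := cd0.
pose F x := \sum_(i < n) a ord0 (lshift n i) * f i x.
pose G x := \sum_(i < n) a ord0 (rshift n i) * g i x.
have cF : continuous F by exact: continuous_lincomb.
have cG : continuous G by exact: continuous_lincomb.
have [d d0 dG] := small_shift_pos cS _ _ cT0 T0pos cG.
exists (fun x => eta0 x + d * F x), (fun x => ((T0 x)^-1 - d * G x)^-1); split.
  apply: (CD_pair_perturb cS) => // dm dq Pdq.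
  rewrite -(dotv_test_vector cS _ _ _ a (dm, dq) cf cg); apply: aH.
  exists 1, (Phi (dm, dq)); split=> //; last by rewrite scale1r.
  by exists (dm, dq) => //; exact: hatP_of_P.
change (cd_defect (fun x => eta0 x + d * F x) (fun x => ((T0 x)^-1 - d * G x)^-1) v w < 0).
rewrite (cd_defect_perturb cS) //; have -> : cd_defect eta0 T0 v w = 0 := heq.
by rewrite add0r pmulr_rlt0 // -(dotv_test_vector cS _ _ _ a (v, w) cf cg).
Qed.
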